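(* The pair of graded graphs $(\mathbf{Motz}_\bullet,\mathbf{U},\mathbf{V})$ is $\phi$-diagonal dual, i.e. $\mathbf{V}^\star\mathbf{U}-\mathbf{U}\mathbf{V}^\star=\phi$, for the linear map $\phi$ defined by $$\phi(u)=\big(2+\#\{i\in[|u|-1] : u_i\ne u_{i+1}\}\big)\,u$$ for every $u\in\mathbf{Motz}$.
   Context: $\mathbb{K}$ is a field of characteristic zero. $\mathbf{Motz}$ is the set of all nonempty words $u=u_1\cdots u_n$ of nonnegative integers with $u_1=u_n=0$ and $|u_{i+1}-u_i|\le1$ for all $i$ (the elements of the operad of Motzkin paths, generated by $00$ and $010$). $\mathbf{Motz}_\bullet$ is this set graded by the degree $\#\{i\in[n-1] : u_{i+1}\ge u_i\}$ (number of flat and up steps). The prefix graph and twisted prefix graph of this operad are given by the linear maps on $\mathbb{K}\langle\mathbf{Motz}\rangle$ (basis: these words) $$\mathbf{U}(u)=\sum_{i\in[|u|]}\big(u_1\cdots u_i\,u_i\,u_{i+1}\cdots u_{|u|}+u_1\cdots u_i\,(u_i+1)\,u_i\,u_{i+1}\cdots u_{|u|}\big),$$ $$\mathbf{V}(u)=\sum_{\substack{i\in[|u|]\\ i=|u|\text{ or } u_i>u_{i+1}}}\big(u_1\cdots u_i\,u_i\,u_{i+1}\cdots u_{|u|}+u_1\cdots u_i\,(u_i+1)\,u_i\,u_{i+1}\cdots u_{|u|}\big).$$ $\mathbf{V}^\star$ is the adjoint of $\mathbf{V}$ for the scalar product making the words orthonormal. *)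

From mathcomp Require Import all_boot all_order all_algebra.
Set Implicit Arguments. Unset Strict Implicit. Unset Printing Implicit Defensive.
Import GRing.Theory.
Local Open Scope ring_scope.

Notation word := (seq nat).

Definition motz (u : word) : bool :=
  [&& u != [::], head 0%N u == 0%N, last 0%N u == 0%N &
      path (fun a b => (a <= b.+1)%N && (b <= a.+1)%N) (head 0%N u) (behead u)].

(* Insertion after (1-based) position i+1, i.e. after the 0-based letter i. *)
Definition ins (u : word) (i : nat) (s : word) : word :=
  take i.+1 u ++ s ++ drop i.+1 u.

Definition ins_pair (u : word) (i : nat) : seq word :=
  [:: ins u i [:: nth 0%N u i]; ins u i [:: (nth 0%N u i).+1; nth 0%N u i]].

(* U(u), as a list of basis words (with multiplicity). *)
Definition Ulist (u : word) : seq word :=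
  flatten [seq ins_pair u i | i <- iota 0 (size u)].

(* V(u): only positions i = |u| or u_i > u_{i+1} (1-based). *)
Definition Vlist (u : word) : seq word :=
  flatten [seq ins_pair u i | i <- iota 0 (size u) &
           (i.+1 == size u) || (nth 0%N u i.+1 < nth 0%N u i)%N].

Fixpoint words (n b : nat) : seq word :=
  if n is k.+1 then [seq x :: s | x <- iota 0 b, s <- words k b] else [:: [::]].

(* All Motzkin words of length at most n (their letters are <= n). *)
Definition motz_upto (n : nat) : seq word :=
  [seq v <- flatten [seq words k n.+1 | k <- iota 1 n] | motz v].

Section Vectors.
Variable K : fieldType.

(* Elements of K<Motz> as formal linear combinations of words. *)
Definition vec := seq (K * word).

Definition coef (x : vec) (w : word) : K :=
  \sum_(p <- x) (if p.2 == w then p.1 else 0).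

Definition lin (f : word -> vec) (x : vec) : vec :=
  flatten [seq [seq (p.1 * q.1, q.2) | q <- f p.2] | p <- x].

Definition Uop (u : word) : vec := [seq (1, w) | w <- Ulist u].
Definition Vop (u : word) : vec := [seq (1, w) | w <- Vlist u].

(* Adjoint of V for the scalar product making words orthonormal:
   V*(u) = sum_{v in Motz} <V v, u> v.  Since V strictly increases length,
   only v with |v| < |u| contribute, so the sum ranges over motz_upto (size u). *)
Definition Vstar (u : word) : vec :=
  [seq (coef (Vop v) u, v) | v <- motz_upto (size u)].

Definition phi (u : word) : vec :=
  [:: (((2 + count (fun i => nth 0%N u i != nth 0%N u i.+1) (iota 0 (size u).-1))%N)%:R, u)].

End Vectors.

(* Read U(u) and V(u) as lists of words.  The adjoint of V is then a list [Vdel x] of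
   deletions: right after a letter a that ends x or is followed by a smaller letter, delete an
   inserted a or an inserted (a+1) a.  Composing an insertion with a deletion at another place
   gives the same words in either order, so as multisets V* U(u) and U V*(u) differ exactly by
   the pairs that delete what was just inserted: two for each position allowed by V, i.e.
   |V(u)| copies of u.  For a Motzkin word this number is 2 + 2 #descents = 2 + #changes, since
   a path from 0 to 0 has as many ascents as descents.  Finally U preserves Motzkin words and
   deletions shorten them, so restricting V* to shorter Motzkin words loses nothing. *)

From mathcomp Require Import all_boot all_order all_algebra.
From mathcomp Require Import zify.
Import GRing.Theory.

Section SeqCount.
Context {T : eqType}.

Lemma count_cons_map (a c : T) x (L : seq (seq T)) :
  count_mem (c :: x) (map (cons a) L) = (a == c) * count_mem x L.
Proof.
rewrite count_map; case: eqP => [->|ne] /=.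
  by rewrite mul1n; apply: eq_count => y; rewrite /= eqseq_cons eqxx.
by rewrite (@eq_count _ _ pred0) ?count_pred0 // => y; rewrite /= eqseq_cons; case: eqP.
Qed.

Lemma count_nil_map (a : T) L : count_mem [::] (map (cons a) L) = 0.
Proof. by elim: L. Qed.

Lemma count_allpairs_cons (X : seq T) (L : seq (seq T)) y t :
  count_mem (y :: t) [seq x :: s | x <- X, s <- L] = count_mem y X * count_mem t L.
Proof.
by elim: X => //= x X IH; rewrite count_cat IH count_cons_map mulnDl [x == y]eq_sym.
Qed.

End SeqCount.

Lemma perm_flatten_map_cat {T : Type} {U : eqType} (f g : T -> seq U) s :
  perm_eq (flatten [seq f x ++ g x | x <- s]) (flatten (map f s) ++ flatten (map g s)).
Proof. by elim: s => //= x s IH; rewrite (perm_catl _ IH) perm_catACA. Qed.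

Section SumCount.
Context {R : pzSemiRingType} {T : eqType}.
Local Open Scope ring_scope.

Lemma sum_pred1 (s : seq T) (F : T -> R) d :
  \sum_(v <- s) (if v == d then F v else 0) = (count_mem d s)%:R * F d.
Proof.
rewrite -big_mkcond (eq_bigr (fun _ => 1 * F d)) => [|v /eqP->]; last by rewrite mul1r.
by rewrite -mulr_suml -sum1_count natr_sum.
Qed.

Lemma natr_count_flatten (f : T -> seq T) s w :
  (count_mem w (flatten (map f s)))%:R = \sum_(x <- s) (count_mem w (f x))%:R :> R.
Proof. by rewrite count_flatten -map_comp sumnE big_map natr_sum. Qed.

Lemma sum_count_mem (s r : seq T) (g : T -> R) :
  {in r, forall v, count_mem v s = 1%N} ->
  \sum_(v <- s) (count_mem v r)%:R * g v = \sum_(v <- r) g v.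
Proof.
elim: r => [|y r IH] s1; first by rewrite big_nil big1 // => v _; rewrite mul0r.
rewrite big_cons -IH => [|v vr]; last by apply: s1; rewrite inE vr orbT.
have := sum_pred1 s g y; rewrite s1 ?mem_head // mul1r => <-.
rewrite -big_split; apply: eq_bigr => v _ /=.
by rewrite natrD mulrDl eq_sym; case: eqP => [->|]; rewrite ?mul1r ?mul0r.
Qed.

End SumCount.

(* [lt_head s a]: the letter a followed by s is the last one or starts a descent, which is
   where V inserts. *)
Definition lt_head (s : word) (a : nat) : bool := if s is b :: _ then b < a else true.

Lemma Ulist_cons a s :
  Ulist (a :: s) = [:: [:: a, a & s]; [:: a, a.+1, a & s]] ++ map (cons a) (Ulist s).
Proof.
by rewrite /Ulist /= (iotaDl 1 0) map_flatten -!map_comp /ins /= take0 drop0.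
Qed.

Lemma Vlist_cons a s :
  Vlist (a :: s) = (if lt_head s a then [:: [:: a, a & s]; [:: a, a.+1, a & s]] else [::])
                   ++ map (cons a) (Vlist s).
Proof.
rewrite /Vlist /= (_ : _ || _ = lt_head s a); last by case: s.
rewrite (iotaDl 1 0) filter_map map_flatten -map_comp.
by case: (lt_head s a); rewrite /= -!map_comp /ins /= ?take0 ?drop0.
Qed.

Lemma size_Vlist_cons a s : size (Vlist (a :: s)) = 2 * lt_head s a + size (Vlist s).
Proof. by rewrite Vlist_cons size_cat size_map; case: (lt_head s a). Qed.

Definition strip (a : nat) (s : word) : seq word :=
  if s is b :: r then (if (b == a) && lt_head r a then [:: r] else [::]) else [::].

Definition strip_peak (a : nat) (s : word) : seq word :=
  if s is b :: r then (if b == a.+1 then strip a r else [::]) else [::].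

Fixpoint Vdel (x : word) : seq word :=
  if x is a :: s then map (cons a) (strip a s ++ strip_peak a s ++ Vdel s) else [::].

Lemma Vdel_cons a s : Vdel (a :: s) = map (cons a) (strip a s ++ strip_peak a s ++ Vdel s).
Proof. by []. Qed.

Arguments Vdel : simpl never.

Lemma count_strip a x w : count_mem w (strip a x) = lt_head w a && (x == a :: w).
Proof.
case: x => [|b r] /=; first by case: (lt_head w a).
rewrite eqseq_cons; case: (b == a); last by rewrite andbF.
by have [->|ne] := eqVneq r w; case: (lt_head _ a); rewrite /= ?eqxx ?(negbTE ne) ?andbF.
Qed.

Lemma count_strip_peak a x w :
  count_mem w (strip_peak a x) = lt_head w a && (x == [:: a.+1, a & w]).
Proof.
case: x => [|b r] /=; first by case: (lt_head w a).
by rewrite eqseq_cons; case: (b == a.+1); rewrite /= ?count_strip ?andbF.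
Qed.

Lemma count_Vlist x w : count_mem x (Vlist w) = count_mem w (Vdel x).
Proof.
elim: w x => [|a w IH] [|c x] //; rewrite ?Vdel_cons ?Vlist_cons ?count_cat.
- by rewrite count_nil_map.
- by rewrite count_nil_map addn0; case: (lt_head _ _).
rewrite !count_cons_map IH !count_cat count_strip count_strip_peak.
have [<-|ne] := eqVneq a c; case: (lt_head w a); rewrite /= ?eqseq_cons ?eqxx //=.
  by rewrite ![x == _]eq_sym; lia.
by rewrite (negbTE ne).
Qed.

Lemma lt_head_Ulist a s y : y \in Ulist s -> lt_head y a = lt_head s a.
Proof.
case: s => [|b s] //; rewrite Ulist_cons !inE.
by case/or3P => [/eqP->|/eqP->|/mapP [t _ ->]].
Qed.

Lemma strip_Ulist a s :
  flatten (map (strip a) (Ulist s)) = flatten (map Ulist (strip a s)).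
Proof.
case: s => [|b r] //; rewrite Ulist_cons /= -map_comp.
have -> : (b == a) && (b < a) = false by case: eqP => // ->; rewrite ltnn.
have -> : (b == a) && (b.+1 < a) = false by case: eqP => // ->; rewrite ltnNge leqnSn.
have -> : [seq (strip a \o cons b) y | y <- Ulist r] =
          [seq if (b == a) && lt_head r a then [:: y] else [::] | y <- Ulist r].
  by apply/eq_in_map => y /(lt_head_Ulist a) /= ->.
case: ifP => _ /=; first by rewrite flatten_seq1 cats0.
by elim: (Ulist r).
Qed.

Lemma strip_peak_Ulist a s :
  flatten (map (strip_peak a) (Ulist s)) = flatten (map Ulist (strip_peak a s)).
Proof.
case: s => [|b r] //; rewrite Ulist_cons /= -map_comp.
have [->|nba] := eqVneq b a.+1; last by elim: (Ulist r) => //= y L ->; rewrite (negbTE nba).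
rewrite !gtn_eqF //= -strip_Ulist; congr flatten.
by apply: eq_map => y /=; rewrite eqxx.
Qed.

Lemma Ulist_map_cons a L :
  perm_eq (flatten (map Ulist (map (cons a) L)))
    ([seq [:: a, a & v] | v <- L] ++ [seq [:: a, a.+1, a & v] | v <- L]
     ++ map (cons a) (flatten (map Ulist L))).
Proof.
rewrite -map_comp (eq_map (Ulist_cons a)) catA.
apply: perm_trans (perm_flatten_map_cat _ _ _) _.
rewrite map_flatten -map_comp perm_cat2r.
have := perm_flatten_map_cat (fun v => [:: [:: a, a & v]])
                              (fun v => [:: [:: a, a.+1, a & v]]) L.
by rewrite !flatten_map1.
Qed.

Lemma Vdel_map_cons a L :
  perm_eq (flatten (map Vdel (map (cons a) L)))
    (map (cons a) (flatten (map (strip a) L) ++ flatten (map (strip_peak a) L)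
                   ++ flatten (map Vdel L))).
Proof.
rewrite -map_comp (eq_map (Vdel_cons a)) (map_comp (map (cons a))) -map_flatten perm_map //.
apply: perm_trans (perm_flatten_map_cat _ _ _) _.
by rewrite perm_cat2l perm_flatten_map_cat.
Qed.

Lemma Vdel_Ulist u :
  perm_eq (flatten (map Vdel (Ulist u)))
          (flatten (map Ulist (Vdel u)) ++ nseq (size (Vlist u)) u).
Proof.
elim: u => [|a s IH] //.
set X := strip a s ++ strip_peak a s ++ Vdel s.
set S := if lt_head s a then [:: s] else [::].
(* Deleting right after the first letter undoes the insertion made there ([S]); every other
   deletion commutes with that insertion. *)
have Vdel_aa : Vdel [:: a, a & s] = map (cons a) S ++ [seq [:: a, a & v] | v <- X].
  by rewrite !Vdel_cons /= eqxx (ltn_eqF (ltnSn a)) map_cat -map_comp.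
have Vdel_peak :
    Vdel [:: a, a.+1, a & s] = map (cons a) S ++ [seq [:: a, a.+1, a & v] | v <- X].
  rewrite !Vdel_cons /= !eqxx (gtn_eqF (ltnSn a)) (ltn_eqF (ltnSn a)).
  rewrite (ltn_eqF (leqnSn a.+1)) /=.
  by rewrite map_cat -!map_comp.
rewrite Vdel_cons -/X perm_sym (perm_catr _ (Ulist_map_cons a X)) perm_sym.
rewrite Ulist_cons map_cat flatten_cat (perm_catl _ (Vdel_map_cons a _)).
rewrite strip_Ulist strip_peak_Ulist /= Vdel_aa Vdel_peak size_Vlist_cons.
apply/permP => p; rewrite !count_cat !map_cat !count_cat (permP (perm_map (cons a) IH)).
rewrite !flatten_cat !map_cat !count_cat map_nseq !count_nseq /S.
by case: (lt_head s a) => /=; lia.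
Qed.

Local Notation motz_step := (fun a b : nat => (a <= b.+1) && (b <= a.+1)).

Lemma Ulist_shape {w x} : x \in Ulist w ->
  [/\ size w < size x, head 0 x = head 0 w, forall c, last c x = last c w
    & forall c, path motz_step c x = path motz_step c w].
Proof.
elim: w x => [|a s IH] x //; rewrite Ulist_cons !inE.
case/or3P => [/eqP->|/eqP->|/mapP [y /IH [lt_sy _ last_y path_y] ->]] /=.
- by split=> // c; rewrite leqnSn.
- by split=> // c; rewrite ltnSn (leqW (leqnSn a)).
- by split=> [|//|_|c]; rewrite ?ltnS ?last_y ?path_y.
Qed.

Lemma motzE u :
  motz u = [&& u != [::], head 0 u == 0, last 0 u == 0 & path motz_step (head 0 u) u].
Proof. by case: u => //= a s; rewrite leqnSn. Qed.

Lemma motz_Ulist {w x} : x \in Ulist w -> motz x = motz w.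
Proof.
case: w => [//|a s] xUw; have [lt_wx head_x last_x path_x] := Ulist_shape xUw.
by rewrite !motzE head_x last_x path_x; case: x lt_wx {xUw head_x last_x path_x}.
Qed.

Lemma Vlist_sub_Ulist w : {subset Vlist w <= Ulist w}.
Proof.
move=> x /flatten_mapP [i]; rewrite mem_filter => /andP [_ i_w] x_i.
by apply/flatten_mapP; exists i.
Qed.

Lemma Vdel_motz {x w} : motz x -> w \in Vdel x -> motz w /\ size w < size x.
Proof.
rewrite -has_pred1 has_count -count_Vlist -has_count has_pred1 => motz_x /Vlist_sub_Ulist xUw.
by rewrite -(motz_Ulist xUw); have [] := Ulist_shape xUw.
Qed.

Lemma count_words k b w : count_mem w (words k b) = (size w == k) && all (gtn b) w.
Proof.
elim: k w => [|k IH] [|y t] //=.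
  by elim: (iota 0 b) => //= x X IHX; rewrite count_cat IHX count_nil_map.
rewrite (count_allpairs_cons (iota 0 b) (words k b)) IH count_uniq_mem ?iota_uniq //.
by rewrite mem_iota eqSS; case: (y < b); case: (_ == _); case: (all _ t).
Qed.

Lemma count_flatten_words ks b w :
  count_mem w (flatten [seq words k b | k <- ks]) = count_mem (size w) ks * all (gtn b) w.
Proof.
elim: ks => //= k ks IH; rewrite count_cat IH count_words mulnDl eq_sym.
by case: (k == size w); rewrite ?mul1n.
Qed.

Lemma path_motz_step_le c s : path motz_step c s -> all (fun x => x <= c + size s) s.
Proof.
elim: s c => //= b s IH c /andP [/andP [_ le_bc] /IH le_s].
apply/andP; split; first by lia.
by apply: sub_all le_s => x /=; lia.
Qed.

Lemma motz_lt_size {w} : motz w -> all (gtn (size w)) w.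
Proof.
case: w => //= a s; rewrite /motz /= => /and3P [/eqP-> _ /path_motz_step_le le_s].
by rewrite ltnS leq0n; apply: sub_all le_s => x /=; rewrite add0n ltnS.
Qed.

Lemma count_motz_upto n w : motz w -> size w <= n -> count_mem w (motz_upto n) = 1.
Proof.
move=> motz_w le_wn; have w_nil : w != [::] by case: w motz_w {le_wn}.
have lt_w : all (gtn n.+1) w by apply: sub_all (motz_lt_size motz_w) => x /=; lia.
rewrite count_filter (eq_count (a2 := pred1 w)); last first.
  by move=> v /=; case: eqP => // ->; rewrite motz_w.
rewrite count_flatten_words count_uniq_mem ?iota_uniq //.
by rewrite mem_iota add1n ltnS le_wn lt0n size_eq0 w_nil lt_w.
Qed.

Definition nadj (P : rel nat) (u : word) : nat :=
  count (fun i => P (nth 0 u i) (nth 0 u i.+1)) (iota 0 (size u).-1).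

Lemma nadj_cons P a b s : nadj P [:: a, b & s] = P a b + nadj P (b :: s).
Proof. by rewrite /nadj /= (iotaDl 1 0) count_map. Qed.

Lemma nadj_neq u : nadj (fun x y => x != y) u = nadj ltn u + nadj gtn u.
Proof.
elim: u => // a s IH; case: s IH => // b s IH.
by rewrite !nadj_cons IH neq_ltn /=; case: ltngtP; lia.
Qed.

Lemma size_Vlist a s : size (Vlist (a :: s)) = 2 + 2 * nadj gtn (a :: s).
Proof.
elim: s a => [|b s IH] a; first by rewrite size_Vlist_cons.
by rewrite size_Vlist_cons IH nadj_cons /=; lia.
Qed.

Lemma path_nadj c s :
  path motz_step c s -> c + nadj ltn (c :: s) = last c s + nadj gtn (c :: s).
Proof.
elim: s c => [|b s IH] c //= /andP [/andP [le_cb le_bc] /IH].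
by rewrite !nadj_cons /=; case: ltngtP; lia.
Qed.

Lemma size_Vlist_motz u : motz u -> size (Vlist u) = 2 + nadj (fun x y => x != y) u.
Proof.
case: u => // a s; rewrite /motz /= => /and3P [/eqP a0 /eqP last0 /path_nadj].
by rewrite size_Vlist nadj_neq last0 a0; lia.
Qed.

Local Open Scope ring_scope.

Section Coefficients.
Variable K : fieldType.

Lemma coef_lin (f : word -> vec K) x w :
  coef (lin f x) w = \sum_(p <- x) p.1 * coef (f p.2) w.
Proof.
elim: x => [|p x IH]; first by rewrite /coef !big_nil.
rewrite big_cons -IH /lin /= /coef big_cat big_map mulr_sumr /=; congr (_ + _).
by apply: eq_bigr => q _; case: eqP; rewrite ?mulr0.
Qed.

Lemma coef_sum_words (s : seq word) w :
  coef [seq (1, v) | v <- s] w = (count_mem w s)%:R :> K.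
Proof. by rewrite /coef big_map (sum_pred1 s (fun=> 1)) mulr1. Qed.

Lemma sum_Vstar_motz x (g : word -> K) :
  motz x -> \sum_(p <- Vstar K x) p.1 * g p.2 = \sum_(v <- Vdel x) g v.
Proof.
move=> motz_x; rewrite big_map /=.
under eq_bigr do rewrite coef_sum_words count_Vlist.
apply: sum_count_mem => v /(Vdel_motz motz_x) [motz_v lt_vx].
by rewrite count_motz_upto // ltnW.
Qed.

Lemma coef_Vstar_motz x w : motz x -> coef (Vstar K x) w = (count_mem w (Vdel x))%:R.
Proof.
move=> motz_x; rewrite /coef (eq_bigr (fun p => p.1 * (p.2 == w)%:R)) => [|p _]; last first.
  by case: eqP; rewrite ?mulr1 ?mulr0.
rewrite (sum_Vstar_motz _ (fun v => (v == w)%:R)) // -[RHS]mulr1 -sum_pred1.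
by apply: eq_bigr => v _; rewrite eq_sym; case: eqP.
Qed.

Lemma coef_lin_Vstar_Uop u w : motz u ->
  coef (lin (@Vstar K) (Uop K u)) w = (count_mem w (flatten (map Vdel (Ulist u))))%:R.
Proof.
move=> motz_u; rewrite coef_lin big_map natr_count_flatten big_seq [RHS]big_seq.
by apply: eq_bigr => x xU; rewrite mul1r coef_Vstar_motz // (motz_Ulist xU).
Qed.

Lemma coef_lin_Uop_Vstar u w : motz u ->
  coef (lin (Uop K) (Vstar K u)) w = (count_mem w (flatten (map Ulist (Vdel u))))%:R.
Proof.
move=> motz_u; rewrite coef_lin (sum_Vstar_motz _ (fun v => coef (Uop K v) w)) //.
by rewrite natr_count_flatten; apply: eq_bigr => v _; rewrite coef_sum_words.
Qed.

Lemma coef_phi_motz u w : motz u -> coef (phi K u) w = ((u == w) * size (Vlist u))%:R.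
Proof.
move=> motz_u; rewrite /phi /coef big_seq1 /= size_Vlist_motz //.
by case: (u == w); rewrite ?mul1n.
Qed.

End Coefficients.

Theorem proposition4p9 (K : fieldType) (charK : [pchar K] =i pred0)
  (u : word) : motz u ->
  forall w : word,
    coef (lin (@Vstar K) (Uop K u)) w - coef (lin (Uop K) (Vstar K u)) w
    = coef (phi K u) w.
Proof.
move=> motz_u w.
rewrite coef_lin_Vstar_Uop // coef_lin_Uop_Vstar // coef_phi_motz // (permP (Vdel_Ulist u)).
by rewrite count_cat count_nseq natrD addrAC subrr add0r.
Qed.
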